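(* Let $m\ge1$, $p\ge0$ be integers and $\alpha$ a positive common divisor of $m$ and $p$. Then $\Lambda^{(\alpha)}(m,p)$ is a finite set and its cardinality is divisible by $m/\alpha$.
   Context: $\Lambda(m,p)=\{(\lambda_i)_{i\in\mathbb Z}: \lambda_i\in\mathbb Z,\ \lambda_1=0,\ \lambda_i\le\lambda_{i+1},\ \lambda_{i+m}=\lambda_i+p \text{ for all } i\}$. For a positive common divisor $\alpha$ of $m$ and $p$ (every positive integer divides $0$), $\Lambda^{(\alpha)}(m,p)=\{\lambda\in\Lambda(m/\alpha,p/\alpha): \lambda\notin\Lambda(m/\alpha',p/\alpha') \text{ for every common divisor } \alpha'>\alpha \text{ of } m,p\}$. *)

From Stdlib Require Import ZArith List.
Open Scope Z_scope.

Definition Lam (m p : Z) (l : Z -> Z) : Prop :=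
  l 1 = 0 /\
  (forall i : Z, l i <= l (i + 1)) /\
  (forall i : Z, l (i + m) = l i + p).

Definition LamAlpha (m p alpha : Z) (l : Z -> Z) : Prop :=
  Lam (m / alpha) (p / alpha) l /\
  (forall alpha' : Z, (alpha' | m) -> (alpha' | p) -> alpha < alpha' ->
     ~ Lam (m / alpha') (p / alpha') l).

(* Write n = m/α and q = p/α.  The shift  (σ l)(i) = l(i+1) - l(2)  maps
   Λ(n',q') to itself for every (n',q'), and σ^n = id on Λ(n,q); hence σ
   permutes Λ^(α)(m,p).  If σ^d l = l with 0 < d < n, then l also has the
   period g = gcd(d,n), a proper divisor of n, so l ∈ Λ(m/α', p/α') for
   α' = α·(n/g) > α, i.e. l ∉ Λ^(α)(m,p).  Thus every element of Λ^(α)(m,p)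
   has exact σ-period n, and a finite set on which a map acts with all
   points of exact period N has cardinality divisible by N.  Finiteness
   holds because an element of Λ(n,q) is determined by its values
   l(1), ..., l(n), all of which lie in [0, q]. *)
From Stdlib Require Import ZArith List Lia.
From Stdlib Require Import ClassicalEpsilon FunctionalExtensionality.
Open Scope Z_scope.

Section OrbitCounting.
Variables (T : Type) (dec : forall x y : T, {x = y} + {x <> y}).
Variables (s : T -> T) (N : nat).
Hypothesis N_pos : (0 < N)%nat.

Definition exact_period (x : T) : Prop :=
  Nat.iter N s x = x /\ forall d, (0 < d < N)%nat -> Nat.iter d s x <> x.

Definition orbit (x : T) : list T := map (fun k => Nat.iter k s x) (seq 0 N).

Lemma orbit_length (x : T) : length (orbit x) = N.
Proof. unfold orbit. now rewrite length_map, length_seq. Qed.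

Lemma iter_in_orbit (x : T) :
  Nat.iter N s x = x -> forall j, In (Nat.iter j s x) (orbit x).
Proof.
  intros Hx j.
  assert (Hmul : forall t, Nat.iter (t * N) s x = x).
  { induction t as [|t IH]; [reflexivity|].
    now rewrite Nat.mul_succ_l, Nat.add_comm, Nat.iter_add, IH. }
  rewrite (Nat.div_mod_eq j N), Nat.add_comm, Nat.iter_add, Nat.mul_comm, Hmul.
  unfold orbit. apply (in_map (fun k => Nat.iter k s x)), in_seq.
  pose proof (Nat.mod_upper_bound j N); lia.
Qed.

Lemma orbit_NoDup (x : T) : exact_period x -> NoDup (orbit x).
Proof.
  intros [Hper Hfree].
  assert (Hlt : forall a b, (a < b < N)%nat -> Nat.iter a s x <> Nat.iter b s x).
  { intros a b Hab E. apply (Hfree (N - b + a)%nat); [lia|].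
    rewrite Nat.iter_add, E, <- Nat.iter_add.
    now replace (N - b + b)%nat with N by lia. }
  apply NoDup_map_NoDup_ForallPairs; [|apply seq_NoDup].
  intros a b Ha Hb E. apply in_seq in Ha, Hb.
  destruct (Nat.lt_total a b) as [h|[h|h]]; [|exact h|];
    exfalso; [apply (Hlt a b) | apply (Hlt b a)]; auto; lia.
Qed.

Lemma orbit_pred (x y : T) :
  Nat.iter N s x = x -> Nat.iter N s y = y -> In (s y) (orbit x) -> In y (orbit x).
Proof.
  intros Hx Hy Hsy. apply in_map_iff in Hsy as [k [Ek _]].
  replace y with (Nat.iter (N - 1 + k) s x); [now apply iter_in_orbit|].
  rewrite Nat.iter_add, Ek, <- Nat.iter_succ_r.
  now replace (S (N - 1)) with N by lia.
Qed.

(* A duplicate-free list closed under [s], all of whose points have exact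
   period [N], has length divisible by [N]: it splits into orbits of size N. *)
Lemma exact_period_divides_length (L : list T) :
  NoDup L -> (forall x, In x L -> In (s x) L) ->
  (forall x, In x L -> exact_period x) -> Nat.divide N (length L).
Proof.
  remember (length L) as len eqn:Hlen. revert L Hlen.
  induction len as [len IH] using lt_wf_ind.
  intros L Hlen Hnd Hcl Hper.
  destruct L as [|x L0]; [subst; now exists 0%nat|].
  set (L := x :: L0) in *.
  assert (HxL : In x L) by now left.
  set (inO := fun y => if in_dec dec y (orbit x) then true else false).
  set (rest := filter (fun y => negb (inO y)) L).
  assert (Horbit : length (filter inO L) = N).
  { assert (Hsub : incl (filter inO L) (orbit x)).
    { intros y [_ Hy]%filter_In. unfold inO in Hy.
      now destruct (in_dec dec y (orbit x)). }
    assert (Hsup : incl (orbit x) (filter inO L)).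
    { intros y Hy. apply filter_In. split; [|unfold inO; now destruct in_dec].
      apply in_map_iff in Hy as [k [<- _]].
      now apply Nat.iter_invariant. }
    pose proof (NoDup_incl_length (NoDup_filter inO Hnd) Hsub).
    pose proof (NoDup_incl_length (orbit_NoDup x (Hper x HxL)) Hsup).
    rewrite orbit_length in *; lia. }
  pose proof (filter_length inO L) as Hsplit. fold rest in Hsplit.
  assert (Hrest : Nat.divide N (length rest)).
  { apply (IH (length rest)) with (L := rest); auto; [lia|apply NoDup_filter; auto| |].
    - intros y [HyL Hy]%filter_In. apply filter_In. split; [now apply Hcl|].
      unfold inO in *. destruct (in_dec dec y (orbit x)) as [|Hn]; [discriminate|].
      destruct (in_dec dec (s y) (orbit x)) as [Hi|]; [|reflexivity].
      exfalso. apply Hn, orbit_pred; auto; [apply Hper, HxL | apply Hper, HyL].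
    - intros y [Hy _]%filter_In. now apply Hper. }
  rewrite Hlen, <- Hsplit, Horbit. apply Nat.divide_add_r; [apply Nat.divide_refl|auto].
Qed.

End OrbitCounting.

Lemma quasi_period_mul (l : Z -> Z) (T C : Z) :
  (forall i, l (i + T) = l i + C) -> forall t i, l (i + T * t) = l i + C * t.
Proof.
  intros H.
  assert (Hnat : forall (k : nat) i, l (i + T * Z.of_nat k) = l i + C * Z.of_nat k).
  { induction k as [|k IH]; intros i; [now rewrite !Z.mul_0_r, !Z.add_0_r|].
    rewrite Nat2Z.inj_succ.
    replace (i + T * Z.succ (Z.of_nat k)) with ((i + T * Z.of_nat k) + T) by lia.
    rewrite H, IH. lia. }
  intros t i. destruct (Z.le_gt_cases 0 t) as [Ht|Ht].
  - rewrite <- (Z2Nat.id t Ht). apply Hnat.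
  - pose proof (Hnat (Z.to_nat (- t)) (i + T * t)) as E.
    rewrite Z2Nat.id in E by lia.
    replace (i + T * t + T * - t) with i in E by lia. lia.
Qed.

Lemma step_monotone (l : Z -> Z) :
  (forall i, l i <= l (i + 1)) -> forall a b, a <= b -> l a <= l b.
Proof.
  intros H a b Hab. replace b with (a + Z.of_nat (Z.to_nat (b - a))) by lia.
  induction (Z.to_nat (b - a)) as [|k IH]; [rewrite Z.add_0_r; lia|].
  rewrite Nat2Z.inj_succ, Z.add_succ_r, <- Z.add_1_r. specialize (H (a + Z.of_nat k)). lia.
Qed.

(* Two quasi-periods combine into one along their gcd (Bézout). *)
Lemma quasi_period_gcd (l : Z -> Z) (D n c q : Z) :
  (forall i, l (i + D) = l i + c) -> (forall i, l (i + n) = l i + q) ->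
  exists c', forall i, l (i + Z.gcd D n) = l i + c'.
Proof.
  intros HD Hn. destruct (Z.gcd_bezout D n _ eq_refl) as [a [b Hab]].
  exists (c * a + q * b). intros i. rewrite <- Hab.
  replace (i + (a * D + b * n)) with ((i + D * a) + n * b) by lia.
  rewrite (quasi_period_mul l n q Hn), (quasi_period_mul l D c HD). lia.
Qed.

(* The shift σ: re-index by one and renormalise so that the value at 1 is 0. *)
Definition shift (l : Z -> Z) : Z -> Z := fun i => l (i + 1) - l 2.

Lemma shift_iter (l : Z -> Z) (k : nat) :
  l 1 = 0 -> Nat.iter k shift l = fun i => l (i + Z.of_nat k) - l (1 + Z.of_nat k).
Proof.
  intros H1. induction k as [|k IH]; apply functional_extensionality; intros i.
  - simpl. rewrite !Z.add_0_r. lia.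
  - rewrite Nat.iter_succ, IH. unfold shift. rewrite Nat2Z.inj_succ.
    replace (i + 1 + Z.of_nat k) with (i + Z.succ (Z.of_nat k)) by lia.
    replace (2 + Z.of_nat k) with (1 + Z.succ (Z.of_nat k)) by lia. lia.
Qed.

Lemma Lam_shift (n q : Z) (l : Z -> Z) : Lam n q l -> Lam n q (shift l).
Proof.
  intros [H1 [Hmono Hper]]. unfold shift. split; [|split].
  - apply Z.sub_diag.
  - intros i. specialize (Hmono (i + 1)). lia.
  - intros i. replace (i + n + 1) with (i + 1 + n) by lia. rewrite Hper. lia.
Qed.

Lemma shift_iter_period (n q : Z) (l : Z -> Z) :
  0 <= n -> Lam n q l -> Nat.iter (Z.to_nat n) shift l = l.
Proof.
  intros Hn [H1 [_ Hper]]. rewrite shift_iter by exact H1.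
  apply functional_extensionality; intros i.
  rewrite Z2Nat.id, !Hper by exact Hn. lia.
Qed.

(* Since σ is invertible on Λ(n,q), membership in any Λ(n',q') can be read
   off from the shifted sequence. *)
Lemma Lam_of_shift (n q n' q' : Z) (l : Z -> Z) :
  1 <= n -> Lam n q l -> Lam n' q' (shift l) -> Lam n' q' l.
Proof.
  intros Hn HL HL'. rewrite <- (shift_iter_period n q l) by (lia || exact HL).
  replace (Z.to_nat n) with (S (Z.to_nat n - 1)) by lia.
  rewrite Nat.iter_succ_r. apply Nat.iter_invariant; [apply Lam_shift|exact HL'].
Qed.

Lemma LamAlpha_shift (m p alpha : Z) (l : Z -> Z) :
  1 <= m / alpha -> LamAlpha m p alpha l -> LamAlpha m p alpha (shift l).
Proof.
  intros Hn [HL Hprim]. split; [now apply Lam_shift|].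
  intros alpha' Hm Hp Hlt HL'. exact (Hprim alpha' Hm Hp Hlt (Lam_of_shift _ _ _ _ l Hn HL HL')).
Qed.

Lemma shift_fixed_subperiod (n q : Z) (l : Z -> Z) (d : nat) :
  Lam n q l -> (0 < d < Z.to_nat n)%nat -> Nat.iter d shift l = l ->
  exists g c k, 2 <= k /\ n = g * k /\ q = c * k /\ Lam g c l.
Proof.
  intros HL Hd Hfix. pose proof HL as [H1 [Hmono Hper]].
  set (D := Z.of_nat d).
  assert (HD : forall i, l (i + D) = l i + l (1 + D)).
  { intros i. pose proof (f_equal (fun f => f i) Hfix) as Ei.
    rewrite shift_iter in Ei by exact H1. cbv beta in Ei. fold D in Ei. lia. }
  destruct (quasi_period_gcd l D n _ q HD Hper) as [c Hg].
  set (g := Z.gcd D n) in Hg.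
  destruct (Z.gcd_divide_r D n) as [k Hk]. fold g in Hk.
  assert (Hgpos : 0 < g) by (pose proof (Z.gcd_nonneg D n); destruct (Z.eq_dec g 0); lia).
  assert (HgD : g <= D) by (apply Z.divide_pos_le; [lia|apply Z.gcd_divide_l]).
  assert (Hq : q = c * k).
  { pose proof (quasi_period_mul l g c Hg k 1) as E.
    rewrite Z.mul_comm, <- Hk, Hper, H1 in E. lia. }
  exists g, c, k. repeat split; auto; nia.
Qed.

Lemma LamAlpha_exact_period (m p alpha : Z) (l : Z -> Z) :
  0 < alpha -> (alpha | m) -> (alpha | p) -> 1 <= m / alpha ->
  LamAlpha m p alpha l -> exact_period _ shift (Z.to_nat (m / alpha)) l.
Proof.
  intros Ha [n ->] [q ->] Hn [HL Hprim].
  rewrite !Z.div_mul in * by lia.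
  split; [apply (shift_iter_period n q); [lia|exact HL]|].
  intros d Hd Hfix.
  destruct (shift_fixed_subperiod n q l d HL Hd Hfix) as [g [c [k [Hk [-> [-> HLg]]]]]].
  apply (Hprim (alpha * k)).
  - exists g. ring.
  - exists c. ring.
  - nia.
  - replace (g * k * alpha) with (g * (alpha * k)) by ring.
    replace (c * k * alpha) with (c * (alpha * k)) by ring.
    now rewrite !Z.div_mul by lia.
Qed.

Definition range0 (q : Z) : list Z := map Z.of_nat (seq 0 (S (Z.to_nat q))).

Fixpoint words (R : list Z) (k : nat) : list (list Z) :=
  match k with
  | O => nil :: nil
  | S k => flat_map (fun x => map (cons x) (words R k)) R
  end.

Lemma words_complete (R v : list Z) :
  (forall x, In x v -> In x R) -> In v (words R (length v)).
Proof.
  induction v as [|a v IH]; intros H; [now left|].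
  apply in_flat_map. exists a. split; [apply H; now left|].
  apply in_map, IH. intros x Hx. apply H. now right.
Qed.

Definition ofValues (n q : Z) (v : list Z) (i : Z) : Z :=
  nth (Z.to_nat ((i - 1) mod n)) v 0 + q * ((i - 1) / n).

Lemma Lam_ofValues (n q : Z) (l : Z -> Z) : 1 <= n -> Lam n q l ->
  l = ofValues n q (map (fun k => l (Z.of_nat k + 1)) (seq 0 (Z.to_nat n))).
Proof.
  intros Hn [_ [_ Hper]]. apply functional_extensionality; intros i. unfold ofValues.
  pose proof (Z.mod_pos_bound (i - 1) n ltac:(lia)).
  rewrite nth_indep with (d' := l (Z.of_nat 0 + 1)) by (rewrite length_map, length_seq; lia).
  rewrite (map_nth (fun k : nat => l (Z.of_nat k + 1))), seq_nth, Nat.add_0_l, Z2Nat.id by lia.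
  rewrite <- (quasi_period_mul l n q Hper). f_equal.
  pose proof (Z.div_mod (i - 1) n ltac:(lia)). lia.
Qed.

Lemma Lam_values_bounded (n q : Z) (l : Z -> Z) (i : Z) :
  Lam n q l -> 1 <= i <= 1 + n -> 0 <= l i <= q.
Proof.
  intros [H1 [Hmono Hper]] Hi.
  pose proof (step_monotone l Hmono 1 i ltac:(lia)).
  pose proof (step_monotone l Hmono i (1 + n) ltac:(lia)).
  specialize (Hper 1). lia.
Qed.

Lemma Lam_enumerated (n q : Z) (l : Z -> Z) : 1 <= n -> Lam n q l ->
  In l (map (ofValues n q) (words (range0 q) (Z.to_nat n))).
Proof.
  intros Hn HL. rewrite (Lam_ofValues n q l Hn HL) at 1.
  set (v := map (fun k => l (Z.of_nat k + 1)) (seq 0 (Z.to_nat n))).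
  apply in_map.
  replace (Z.to_nat n) with (length v) by (unfold v; now rewrite length_map, length_seq).
  apply words_complete. intros x [k [<- Hk%in_seq]]%in_map_iff.
  pose proof (Lam_values_bounded n q l (Z.of_nat k + 1) HL ltac:(lia)).
  apply in_map_iff. exists (Z.to_nat (l (Z.of_nat k + 1))). split; [lia|apply in_seq; lia].
Qed.

Lemma classical_sublist {A : Type} (P : A -> Prop) (C : list A) :
  (forall x, P x -> In x C) -> exists L, NoDup L /\ forall x, In x L <-> P x.
Proof.
  intros HC.
  pose (dec := fun x y : A => excluded_middle_informative (x = y)).
  pose (b := fun x => if excluded_middle_informative (P x) then true else false).
  exists (nodup dec (filter b C)). split; [apply NoDup_nodup|].
  intros x. rewrite nodup_In, filter_In. unfold b.
  destruct (excluded_middle_informative (P x)) as [Hx|Hx]; split.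
  - now intros _.
  - intros Hx'. split; [now apply HC | reflexivity].
  - now intros [_ Hfalse].
  - now intros Hx'.
Qed.

Theorem mainTheorem5 (m p alpha : Z) (hm : 1 <= m) (hp : 0 <= p)
  (ha : 0 < alpha) (ham : (alpha | m)) (hap : (alpha | p)) :
  exists L : list (Z -> Z),
    NoDup L /\
    (forall l : Z -> Z, In l L <-> LamAlpha m p alpha l) /\
    (m / alpha | Z.of_nat (length L)).
Proof.
  assert (Hn : 1 <= m / alpha) by (destruct ham as [k ->]; rewrite Z.div_mul; nia).
  destruct (classical_sublist (LamAlpha m p alpha)
              (map (ofValues (m / alpha) (p / alpha))
                   (words (range0 (p / alpha)) (Z.to_nat (m / alpha)))))
    as [L [Hnd Hmem]].
  { intros l [HL _]. exact (Lam_enumerated _ _ l Hn HL). }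
  exists L. split; [exact Hnd|]. split; [exact Hmem|].
  assert (Hdiv : Nat.divide (Z.to_nat (m / alpha)) (length L)).
  { apply (exact_period_divides_length _ (fun f g => excluded_middle_informative (f = g))
             shift); [lia|exact Hnd| |].
    - intros l Hl%Hmem. apply Hmem, LamAlpha_shift; assumption.
    - intros l Hl%Hmem. exact (LamAlpha_exact_period m p alpha l ha ham hap Hn Hl). }
  destruct Hdiv as [k Hk]. exists (Z.of_nat k).
  rewrite Hk, Nat2Z.inj_mul, Z2Nat.id; lia.
Qed.
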